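(* Let $L,K,\tau$ be positive integers, $K_{tot}=KL$, and index users by $u=(i,j)$, $i\in\{1,\dots,L\}$, $j\in\{1,\dots,K\}$. Let $\mathbf{q}_u\in\mathbb{R}^\tau$ be unit-norm pilot sequences and $\rho_{uv}=\mathbf{q}_u^T\mathbf{q}_v$. Let $P_u>0$ and $\delta_u>0$ for all users $u$, and define $$\overline{\phi}_u=\frac{P_u}{\delta_u\sum_{v}\rho_{uv}^2P_v/\delta_v-P_u},$$ where the sum is over all $K_{tot}$ users $v$, assuming each denominator is positive. Let $\gamma_u>0$ be SINR requirements such that $\overline{\phi}_u\ge\gamma_u$ for every user $u$. Then $$K_{tot}\le\sqrt{\tau\sum_{i=1}^L\sum_{j=1}^K\frac{1+\gamma_{i_j}}{\gamma_{i_j}}}.$$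
   Context: In the paper, $\overline{\phi}_u$ is the (lower bound on the) asymptotic downlink SINR of user $u$ in a multi-cell massive MIMO network with MRT precoding and least-squares channel estimation as the number of base-station antennas tends to infinity, $P_u$ is the downlink transmit power for user $u$, and $\delta_u$ is the normalization constant of its MRT precoder; $\gamma_{i_j}$ is the SINR requirement of user $j$ in cell $i$. The right-hand side is the paper's upper bound on the user load (number of simultaneously served users whose SINR requirements are met). *)

From mathcomp Require Import all_boot all_order all_algebra.
Set Implicit Arguments. Unset Strict Implicit. Unset Printing Implicit Defensive.
Import Order.TTheory GRing.Theory Num.Theory.
Local Open Scope ring_scope.

Definition user (L K : nat) := ('I_L * 'I_K)%type.

Definition rho (R : ringType) (L K tau : nat) (q : user L K -> 'I_tau -> R)
  (u v : user L K) : R := \sum_(k < tau) q u k * q v k.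

Definition phibar_den (R : fieldType) (L K tau : nat) (q : user L K -> 'I_tau -> R)
  (P delta : user L K -> R) (u : user L K) : R :=
  delta u * (\sum_(v : user L K) (rho q u v) ^+ 2 * P v / delta v) - P u.

Definition phibar (R : fieldType) (L K tau : nat) (q : user L K -> 'I_tau -> R)
  (P delta : user L K -> R) (u : user L K) : R :=
  P u / phibar_den q P delta u.

From mathcomp Require Import all_boot all_order all_algebra.
From mathcomp Require Import ring.
Import Order.TTheory GRing.Theory Num.Theory.
Local Open Scope ring_scope.

(* With weights w_u = P_u / delta_u, the requirement phibar_u >= gamma_u reads
   sum_v rho_uv^2 w_v / w_u <= (1 + gamma_u) / gamma_u.  Summing over u and
   pairing (u, v) with (v, u), the AM-GM bound w_v/w_u + w_u/w_v >= 2 removes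
   the weights, so sum_u (1 + gamma_u) / gamma_u dominates the frame potential
   sum_{u,v} rho_uv^2 of the pilots.  The Welch bound for K_tot unit vectors
   in R^tau gives frame potential >= K_tot^2 / tau. *)

Section SumInequalities.

Context {R : realFieldType}.

Lemma sqr_sum_le_card_sum_sqr (I : finType) (a : I -> R) :
  (\sum_i a i) ^+ 2 <= #|I|%:R * \sum_i a i ^+ 2.
Proof.
set S := \sum_i a i; set S2 := \sum_i a i ^+ 2.
have pairs_ge0 : 0 <= \sum_i \sum_j (a i - a j) ^+ 2.
  by apply: sumr_ge0 => i _; apply: sumr_ge0 => j _; exact: sqr_ge0.
have pairsE : \sum_i \sum_j (a i - a j) ^+ 2 = (#|I|%:R * S2 - S ^+ 2) *+ 2.
  under eq_bigr => i _.
    under eq_bigr => j _ do rewrite sqrrB.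
    rewrite !big_split /= sumrN sumr_const sumrMnl -mulr_sumr.
    over.
  rewrite !big_split /= sumrN sumr_const 2!sumrMnl -mulr_suml -/S -/S2.
  by ring.
by move: pairs_ge0; rewrite pairsE pmulrn_lge0 // subr_ge0.
Qed.

Lemma div_add_div_ge2 (x y : R) : 0 < x -> 0 < y -> 2 <= x / y + y / x.
Proof.
move=> x_gt0 y_gt0.
have -> : x / y + y / x = 2 + (x - y) ^+ 2 / (x * y).
  by field; rewrite !lt0r_neq0.
by rewrite lerDl divr_ge0 ?sqr_ge0 // mulr_ge0 ?ltW.
Qed.

Lemma sum_sym_le_sum_reweighted (I : finType) (r : I -> I -> R) (w : I -> R) :
  (forall u v, r u v = r v u) -> (forall u v, 0 <= r u v) ->
  (forall u, 0 < w u) ->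
  \sum_u \sum_v r u v <= \sum_u \sum_v r u v * (w v / w u).
Proof.
move=> r_sym r_ge0 w_gt0; rewrite -(ler_pMn2r (isT : (0 < 2)%N)).
have swapE : \sum_u \sum_v r u v * (w v / w u) =
             \sum_u \sum_v r u v * (w u / w v).
  by rewrite exchange_big; apply: eq_bigr => u _; apply: eq_bigr => v _; rewrite r_sym.
rewrite [X in _ <= X]mulr2n [X in _ <= _ + X]swapE -big_split -sumrMnl.
apply: ler_sum => u _; rewrite -sumrMnl -big_split /=.
apply: ler_sum => v _; rewrite -mulrDr -mulr_natr.
by rewrite ler_wpM2l // div_add_div_ge2.
Qed.

Lemma sqr_sum (I : finType) (a : I -> R) :
  (\sum_i a i) ^+ 2 = \sum_i \sum_j a i * a j.
Proof. by rewrite expr2 big_distrl /=; apply: eq_bigr => i _; rewrite big_distrr. Qed.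

(* ||G||_F^2 = ||F||_F^2 for the Gram matrix G = Q Q^T of the users and the
   tau x tau frame operator F = Q^T Q, where Q has rows q u. *)
Lemma frame_potentialE (I : finType) (tau : nat) (q : I -> 'I_tau -> R) :
  \sum_u \sum_v (\sum_k q u k * q v k) ^+ 2 =
  \sum_k \sum_l (\sum_u q u k * q u l) ^+ 2.
Proof.
transitivity (\sum_u \sum_v \sum_k \sum_l (q u k * q u l) * (q v k * q v l)).
  apply: eq_bigr => u _; apply: eq_bigr => v _; rewrite sqr_sum.
  by apply: eq_bigr => k _; apply: eq_bigr => l _; ring.
under eq_bigr => u _ do rewrite exchange_big.
rewrite exchange_big; apply: eq_bigr => k _.
under eq_bigr => u _ do rewrite exchange_big.
rewrite exchange_big; apply: eq_bigr => l _.
by rewrite sqr_sum.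
Qed.

Lemma welch_bound {I : finType} {tau : nat} (q : I -> 'I_tau -> R) :
  (forall u, \sum_k q u k * q u k = 1) ->
  #|I|%:R ^+ 2 <= tau%:R * \sum_u \sum_v (\sum_k q u k * q v k) ^+ 2.
Proof.
move=> q_unit; rewrite frame_potentialE.
have traceE : \sum_k \sum_u q u k * q u k = #|I|%:R.
  by rewrite exchange_big (eq_bigr _ (fun u _ => q_unit u)) sumr_const.
rewrite -traceE; apply: le_trans (sqr_sum_le_card_sum_sqr _ _) _.
rewrite card_ord ler_wpM2l // ler_sum // => k _.
by rewrite (bigD1 k) //= lerDl sumr_ge0 // => l _; exact: sqr_ge0.
Qed.

End SumInequalities.

Lemma rhoC (R : comRingType) (L K tau : nat) (q : user L K -> 'I_tau -> R)
  (u v : user L K) : rho q u v = rho q v u.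
Proof. by apply: eq_bigr => k _; rewrite mulrC. Qed.

Lemma sum_rho_reweighted_le (R : realFieldType) (L K tau : nat)
  (q : user L K -> 'I_tau -> R) (P delta : user L K -> R) (g : R) (u : user L K) :
  0 < P u -> 0 < delta u -> 0 < phibar_den q P delta u -> 0 < g ->
  g <= phibar q P delta u ->
  \sum_v rho q u v ^+ 2 * (P v / delta v / (P u / delta u)) <= (1 + g) / g.
Proof.
move=> Pu_gt0 du_gt0 den_gt0 g_gt0 g_le.
have -> : \sum_v rho q u v ^+ 2 * (P v / delta v / (P u / delta u)) =
          1 + (phibar q P delta u)^-1.
  rewrite /phibar /phibar_den.
  set S := \sum_v rho q u v ^+ 2 * P v / delta v.
  have -> : \sum_v rho q u v ^+ 2 * (P v / delta v / (P u / delta u)) =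
            S / (P u / delta u).
    by rewrite mulr_suml; apply: eq_bigr => v _; rewrite !mulrA.
  by field; rewrite !lt0r_neq0.
have phibar_gt0 : 0 < phibar q P delta u by exact: divr_gt0.
by rewrite mulrDl divff ?lt0r_neq0 // div1r addrC lerD2r lef_pV2 ?posrE.
Qed.

Theorem mainTheorem2 (R : rcfType) (L K tau : nat)
  (hL : (0 < L)%N) (hK : (0 < K)%N) (htau : (0 < tau)%N)
  (q : user L K -> 'I_tau -> R) (P delta gamma : user L K -> R)
  (hq : forall u, rho q u u = 1)
  (hP : forall u, 0 < P u) (hdelta : forall u, 0 < delta u)
  (hden : forall u, 0 < phibar_den q P delta u)
  (hgamma : forall u, 0 < gamma u)
  (hreq : forall u, gamma u <= phibar q P delta u) :
  (L * K)%:R <= Num.sqrt (tau%:R * \sum_(i < L) \sum_(j < K)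
                              (1 + gamma (i, j)) / gamma (i, j)).
Proof.
pose w u := P u / delta u.
have w_gt0 u : 0 < w u by rewrite divr_gt0.
have cardE : #|{: user L K}| = (L * K)%N by rewrite card_prod !card_ord.
have -> : \sum_(i < L) \sum_(j < K) (1 + gamma (i, j)) / gamma (i, j) =
          \sum_u (1 + gamma u) / gamma u.
  by rewrite pair_bigA; apply: eq_bigr => -[i j].
rewrite -cardE -[X in X <= _]ger0_norm // -sqrtr_sqr ler_sqrt; last first.
  by rewrite mulr_ge0 // sumr_ge0 // => u _; rewrite divr_ge0 ?addr_ge0 ?ltW.
have reweighted : \sum_u \sum_v rho q u v ^+ 2 <=
                  \sum_u \sum_v rho q u v ^+ 2 * (w v / w u).
  apply: sum_sym_le_sum_reweighted => [u v|u v|//]; first by rewrite rhoC.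
  exact: sqr_ge0.
apply: le_trans (welch_bound q hq) _; rewrite ler_wpM2l //.
apply: le_trans reweighted _; apply: ler_sum => u _.
exact: sum_rho_reweighted_le.
Qed.
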